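(* Let $\Sigma=(\mathbb{N}_0,X,U,\mathscr{U},\phi)$ be a control system as in the standing setup and let $Q\subset X$ be a control set. If $\mathrm{EIM}_k(Q)\cap\operatorname{Int}(Q)\ne\emptyset$ for some $k\in\mathbb N$, then $\mathrm{EIM}_k(Q)=Q$.
   Context: Standing setup: $(X,d)$ is a metric space, $U$ is a compact metric space, and $F:X\times U\to X$ is a map such that $F_u:=F(\cdot,u)$ is continuous for every $u\in U$. Let $\mathscr U=U^{\mathbb N_0}$ with the product topology. For $\omega=(\omega_0,\omega_1,\dots)\in\mathscr U$, $x\in X$, set $\phi(0,x,\omega)=x$ and $\phi(k,x,\omega)=F_{\omega_{k-1}}\circ\cdots\circ F_{\omega_0}(x)$ for $k\ge1$. It is assumed that $\phi:\mathbb N_0\times X\times\mathscr U\to X$ is continuous. Notation: $\mathbb N=\{1,2,\dots\}$; $B(x,\delta)$ is the open ball; $d(y,Q)=\inf_{q\in Q}d(y,q)$; $\operatorname{Int}(Q)$ is the interior of $Q$ in $X$. Control set: $D\subset X$ is a control set if (i) for every $x\in D$ there is $\omega\in\mathscr U$ with $\phi(k,x,\omega)\in D$ for all $k\in\mathbb N_0$; (ii) for every $x\in D$, $D\subset\operatorname{cl}\mathcal O^+(x)$, where $\mathcal O^+(x)=\{\phi(m,x,\omega):m\in\mathbb N_0,\omega\in\mathscr U\}$; (iii) $D$ is maximal with (i) and (ii). For $k\in\mathbb N$: $\mathrm{EIM}_k(Q)$ is the set of $x\in Q$ for which there exist $\delta>0$ and $\omega\in\mathscr U$ such that $\frac1n\sum_{i=0}^{n-1}d(\phi(i,y,\omega),Q)<\frac1k$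 for all $n\in\mathbb N$ and all $y\in B(x,\delta)\cap Q$. *)

From HB Require Import structures.
From mathcomp Require Import all_boot all_order all_algebra.
From mathcomp Require Import all_classical all_reals all_analysis.
Set Implicit Arguments. Unset Strict Implicit. Unset Printing Implicit Defensive.
Import Order.TTheory GRing.Theory Num.Theory.
Local Open Scope classical_set_scope.
Local Open Scope ring_scope.

Section ControlSystem.
Context {R : realType} {X U : metricType R} (F : X -> U -> X).

Fixpoint phi (k : nat) (x : X) (w : nat -> U) : X :=
  match k with
  | 0 => x
  | k.+1 => F (phi k x w) (w k)
  end.

Definition setdist (y : X) (Q : set X) : R := inf [set mdist y q | q in Q].

Definition orbit_plus (x : X) : set X :=
  [set y | exists (m : nat) (w : nat -> U), y = phi m x w].

Definition cs_invariant (D : set X) : Prop :=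
  forall x, D x -> exists w : nat -> U, forall k, D (phi k x w).

Definition cs_approx_ctrl (D : set X) : Prop :=
  forall x, D x -> D `<=` closure (orbit_plus x).

Definition control_set (D : set X) : Prop :=
  [/\ cs_invariant D, cs_approx_ctrl D &
      forall D', cs_invariant D' -> cs_approx_ctrl D' -> D `<=` D' -> D' = D].

Definition EIM (k : nat) (Q : set X) : set X :=
  [set x | Q x /\ exists (delta : R) (w : nat -> U), 0 < delta /\
     forall (n : nat) (y : X), (0 < n)%N -> ball x delta y -> Q y ->
       n%:R^-1 * (\sum_(0 <= i < n) setdist (phi i y w) Q) < k%:R^-1].

End ControlSystem.

From HB Require Import structures.
From mathcomp Require Import all_boot all_order all_algebra.
From mathcomp Require Import all_classical all_reals all_analysis.
Import Order.TTheory GRing.Theory Num.Theory.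
Local Open Scope classical_set_scope.
Local Open Scope ring_scope.

(* Fix x0 in EIM_k(Q) /\ Int(Q), with radius d0 and control w0
   witnessing the EIM condition, and a ball B(x0,e) contained in Q.  Let x in
   Q.  By approximate controllability x0 lies in the closure of O^+(x), so some
   phi(m,x,w) is close to x0; by continuity of phi(m,.,w) every y near x is
   steered by w into B(x0, min(e,d0)), hence into Q.  If moreover y is in Q,
   maximality of the control set forces the whole piece of trajectory
   phi(j,y,w), j <= m, to stay in Q, so its distances to Q vanish.  Using w up
   to time m and w0 afterwards, the Birkhoff averages of d(.,Q) along y are
   then averages of those along phi(m,y,w) under w0 (which are < 1/k), diluted
   by m vanishing terms, hence still < 1/k.  Thus x is in EIM_k(Q). *)

(* Prepending vanishing terms to a sequence with average < c keeps the
   average < c: the mean of f over [0,n) is a diluted mean of its tail. *)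
Lemma mean_lt_zero_prefix (R : realFieldType) (f : nat -> R) (m n : nat) (c : R) :
  0 < c -> (0 < n)%N -> (forall i, (i < m)%N -> f i = 0) ->
  ((m < n)%N -> (n - m)%:R^-1 * \sum_(0 <= i < n - m) f (m + i)%N < c) ->
  n%:R^-1 * \sum_(0 <= i < n) f i < c.
Proof.
move=> c0 n0 f0 tail.
have prefix0 l : (l <= m)%N -> \sum_(0 <= i < l) f i = 0.
  move=> lm; rewrite big_nat big1 // => i /andP[_ il].
  exact/f0/(leq_trans il).
have [nm|mn] := leqP n m; first by rewrite prefix0 // mulr0.
rewrite (big_cat_nat (n := m)) //=; last exact: ltnW.
rewrite prefix0 // add0r -{1}(add0n m) big_addn.
under eq_bigr => i _ do rewrite addnC.
have := tail mn; set S := \sum_(_ <= _ < _) _ => meanS.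
have [S0|S0] := leP S 0.
  apply: le_lt_trans c0; rewrite pmulr_rle0 // invr_gt0 ltr0n.
  exact: leq_ltn_trans mn.
apply: le_lt_trans meanS; rewrite ler_pM2r // lef_pV2 ?posrE ?ltr0n ?subn_gt0 //.
by rewrite ler_nat leq_subr.
Qed.

Section Trajectories.
Context {R : realType} {X U : metricType R} (F : X -> U -> X).

Definition concat_ctrl (m : nat) (w v : nat -> U) : nat -> U :=
  fun i => if (i < m)%N then w i else v (i - m)%N.

Lemma phi_concat m w v x n :
  phi F n x (concat_ctrl m w v) =
  if (n <= m)%N then phi F n x w else phi F (n - m) (phi F m x w) v.
Proof.
elim: n => [|n IH] //=.
have [nm|mn] := ltnP n m.
  by rewrite (ltnW nm) in IH; rewrite IH /concat_ctrl nm.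
rewrite /concat_ctrl ltnNge mn /= subSn //.
have [eqnm|nem] := eqVneq n m; first by rewrite eqnm leqnn subnn in IH *; rewrite IH.
have nm : (n <= m)%N = false by rewrite leqNgt ltn_neqAle eq_sym nem mn.
by rewrite nm in IH; rewrite IH.
Qed.

Lemma phi_concat_after m w v x j :
  phi F (m + j) x (concat_ctrl m w v) = phi F j (phi F m x w) v.
Proof.
rewrite phi_concat; case: ifP => [|_]; last by rewrite addKn.
by rewrite -{2}(addn0 m) leq_add2l leqn0 => /eqP ->; rewrite addn0.
Qed.

Lemma phi_shift j i x w :
  phi F (j + i) x w = phi F i (phi F j x w) (fun l => w (j + l)%N).
Proof. by elim: i => [|i IH] /=; rewrite ?addn0 // addnS /= IH. Qed.

Lemma orbit_plus_trans {p z} : orbit_plus F p z -> orbit_plus F z `<=` orbit_plus F p.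
Proof.
move=> [m [w ->]] y [j [v ->]].
by exists (m + j)%N, (concat_ctrl m w v); rewrite phi_concat_after.
Qed.

Hypothesis contF : forall u : U, continuous (fun x : X => F x u).

Lemma phi_continuous i w : continuous (fun x => phi F i x w).
Proof.
elim: i => [|i IH] /= x; first exact: cvg_id.
exact: (continuous_comp (f := fun y => phi F i y w) (g := fun y => F y (w i)))
  (IH x) (contF _ _).
Qed.

Lemma closure_orbit_phi {p x} i w :
  closure (orbit_plus F p) x -> closure (orbit_plus F p) (phi F i x w).
Proof.
move=> cx B /(phi_continuous i w x) /cx [z [oz Bz]].
exists (phi F i z w); split => //.
by apply: (orbit_plus_trans oz (phi F i z w)); exists i, w.
Qed.

(* A trajectory starting in a control set and lying in it at time m lies in it
   at all intermediate times: otherwise adding this piece of trajectory to Q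
   gives a strictly larger set with properties (i) and (ii). *)
Lemma control_set_trajectory {Q x m w} : control_set F Q ->
  Q x -> Q (phi F m x w) -> forall j, (j <= m)%N -> Q (phi F j x w).
Proof.
move=> [inv apc max] Qx Qm.
pose Q' z := Q z \/ exists2 j, (j <= m)%N & z = phi F j x w.
suff <- : Q' = Q by move=> j jm; right; exists j.
apply: max => [z [Qz|[j jm ->]]||z]; last by left.
- by have [v hv] := inv z Qz; exists v => l; left.
- have [v0 hv0] := inv _ Qm.
  exists (concat_ctrl (m - j) (fun l => w (j + l)%N) v0) => l.
  rewrite phi_concat; case: ifP => h; last by left; rewrite -phi_shift subnKC.
  by right; exists (j + l)%N; rewrite ?phi_shift // -(subnKC jm) leq_add2l.
- have Q_in_closure p : Q' p -> Q `<=` closure (orbit_plus F p).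
    move=> [Qp|[j jm ->]]; first exact: apc.
    move=> q /(apc _ Qm); apply: closureS; apply: orbit_plus_trans.
    by exists (m - j)%N, (fun l => w (j + l)%N); rewrite -phi_shift subnKC.
  move=> p Q'p q [Qq|[j jm ->]]; first exact: Q_in_closure.
  exact/closure_orbit_phi/Q_in_closure.
Qed.

Lemma steer_near {x x0 r} : closure (orbit_plus F x) x0 -> 0 < r ->
  exists m w, exists2 dl : R, 0 < dl &
    forall y, ball x dl y -> ball x0 r (phi F m y w).
Proof.
move=> cx0 r0; have r20 : 0 < r / 2 by rewrite divr_gt0.
have [_ [[m [w ->]] bz]] := cx0 _ (nbhsx_ballx x0 _ r20).
have /nbhs_ballP [dl dl0 hdl] :=
  phi_continuous m w x _ (nbhsx_ballx (phi F m x w) _ r20).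
exists m, w, dl => // y /hdl bm.
by rewrite (splitr r); exact: ball_triangle bz bm.
Qed.

End Trajectories.

Lemma setdist_in {R : realType} {X : metricType R} (Q : set X) y :
  Q y -> setdist y Q = 0.
Proof.
move=> Qy; apply/eqP; rewrite eq_le; apply/andP; split.
  rewrite -(mdistxx y); apply: ge_inf; last by exists y.
  by exists 0 => _ [q _ <-]; exact: mdist_ge0.
apply: lb_le_inf; first by exists (mdist y y), y.
by move=> _ [q _ <-]; exact: mdist_ge0.
Qed.

Theorem mainTheorem5 (R : realType) (X U : metricType R) (F : X -> U -> X)
  (hU : compact [set: U])
  (hF : forall u : U, continuous (fun x : X => F x u))
  (hphi : continuous (fun p : nat * X * {ptws nat -> U} => phi F p.1.1 p.1.2 p.2))
  (Q : set X) (hQ : control_set F Q) (k : nat) (hk : (0 < k)%N)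
  (hint : EIM F k Q `&` interior Q !=set0) :
  EIM F k Q = Q.
Proof.
apply/seteqP; split=> [x []//|x Qx].
have [x0 [[Qx0 [d0 [w0 [d00 mean0]]]] /nbhs_ballP [e e0 ballQ]]] := hint.
have [_ apc _] := hQ.
have ed0 : 0 < Num.min e d0 by rewrite lt_min e0 d00.
have [m [w [dl dl0 steer]]] := steer_near F hF (apc x Qx x0 Qx0) ed0.
split => //; exists dl, (concat_ctrl m w w0); split => // n y n0 /steer bm Qy.
have Qm : Q (phi F m y w) by apply/ballQ/(le_ball _ bm); rewrite ge_min lexx.
apply: (@mean_lt_zero_prefix _ _ m) => //; first by rewrite invr_gt0 ltr0n.
  move=> i im; rewrite phi_concat (ltnW im).
  exact/setdist_in/(control_set_trajectory F hF hQ Qy Qm _ (ltnW im)).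
move=> mn; under eq_bigr => i _ do rewrite phi_concat_after.
apply: mean0; rewrite ?subn_gt0 //.
by apply: le_ball bm; rewrite ge_min lexx orbT.
Qed.
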